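(* Let $\mathcal C$ be a hereditary class of graphs with infinite VC-dimension. Then $\mathcal C$ contains all bipartite graphs, or $\mathcal C$ contains all co-bipartite graphs, or $\mathcal C$ contains all split graphs.
   Context: A class of graphs is hereditary if it is closed under isomorphism and under taking induced subgraphs. For a graph $G$ and $v\in V(G)$, $N[v]$ is the closed neighbourhood. A set $X\subseteq V(G)$ is shattered if for every $S\subseteq X$ there is a vertex $v$ with $N[v]\cap X=S$; the VC-dimension of $G$ is the largest size of a shattered set; a class has infinite VC-dimension if the VC-dimensions of its members are unbounded. A co-bipartite graph is the complement of a bipartite graph (its vertex set can be partitioned into two cliques). A split graph is a graph whose vertex set can be partitioned into a clique and a stable set. *)

From mathcomp Require Import all_boot.
Set Implicit Arguments. Unset Strict Implicit. Unset Printing Implicit Defensive.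

Record sgraph := SGraph {
  vert :> finType;
  adj : rel vert;
  adj_sym : symmetric adj;
  adj_irrefl : irreflexive adj }.

Definition isomorphic (G H : sgraph) : Prop :=
  exists f : vert G -> vert H, bijective f /\ forall x y, adj (f x) (f y) = adj x y.

Section Induced.
Variables (G : sgraph) (S : {set vert G}).
Definition ind_vert : finType := {x : vert G | x \in S}.
Definition ind_adj : rel ind_vert := fun x y => adj (val x) (val y).
Lemma ind_adj_sym : symmetric ind_adj.
Proof. by move=> x y; rewrite /ind_adj adj_sym. Qed.
Lemma ind_adj_irrefl : irreflexive ind_adj.
Proof. by move=> x; rewrite /ind_adj adj_irrefl. Qed.
Definition induced : sgraph := SGraph ind_adj_sym ind_adj_irrefl.
End Induced.

Definition hereditary (C : sgraph -> Prop) : Prop :=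
  (forall G H, isomorphic G H -> C G -> C H) /\
  (forall G (S : {set vert G}), C G -> C (induced S)).

Definition cnbhd (G : sgraph) (v : vert G) : {set vert G} :=
  [set u | (u == v) || adj v u].

Definition shattered (G : sgraph) (X : {set vert G}) : Prop :=
  forall S : {set vert G}, S \subset X -> exists v, cnbhd v :&: X = S.

Definition infinite_VC (C : sgraph -> Prop) : Prop :=
  forall k : nat, exists G : sgraph, C G /\
    exists X : {set vert G}, shattered X /\ k <= #|X|.

Definition stable (G : sgraph) (A : {set vert G}) : Prop :=
  forall x y, x \in A -> y \in A -> ~~ adj x y.
Definition clique (G : sgraph) (A : {set vert G}) : Prop :=
  forall x y, x \in A -> y \in A -> x != y -> adj x y.

Definition vpart2 (G : sgraph) (A B : {set vert G}) : Prop :=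
  [disjoint A & B] /\ A :|: B = setT.

Definition bipartite (G : sgraph) : Prop :=
  exists A B : {set vert G}, vpart2 A B /\ stable A /\ stable B.
Definition cobipartite (G : sgraph) : Prop :=
  exists A B : {set vert G}, vpart2 A B /\ clique A /\ clique B.
Definition split_graph (G : sgraph) : Prop :=
  exists A B : {set vert G}, vpart2 A B /\ clique A /\ stable B.

(* Say G is [two_homogeneous c1 c2] if its vertex set splits into a part on
   which adjacency is constantly c1 and a part on which it is constantly c2;
   bipartite, co-bipartite and split graphs are the types (false, false),
   (true, true) and (true, false) or (false, true).  By Ramsey's theorem a large
   shattered set contains a large shattered set Y on which adjacency is
   constant.  Index Y by codes and, for each bit position i, let column i be a
   vertex whose neighbourhood in Y is the set of codes with bit i set; Ramsey
   again yields m columns on which adjacency is constant.  Every graph of some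
   type (c1, c2) on at most m vertices is then an induced subgraph: its second
   part goes to these columns, its first part to codes recording the adjacencies
   to them.  Hence for every m one of the four types has all its graphs on at
   most m vertices in the class, and since there are only four types, one of
   them works for every m. *)

From mathcomp Require Import all_boot zify.
From Stdlib Require Import Classical.
Set Implicit Arguments. Unset Strict Implicit. Unset Printing Implicit Defensive.

Definition homogeneous (G : sgraph) (c : bool) (A : {set vert G}) :=
  forall x y, x \in A -> y \in A -> x != y -> adj x y = c.

Definition two_homogeneous (c1 c2 : bool) (G : sgraph) :=
  exists A : {set vert G}, homogeneous c1 A /\ homogeneous c2 (~: A).

Definition induced_embedding (H G : sgraph) (phi : vert H -> vert G) :=
  injective phi /\ forall u w, adj (phi u) (phi w) = adj u w.

Lemma exists_injective_into (T U : finType) (A : {set U}) : #|T| <= #|A| ->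
  exists e : T -> U, injective e /\ forall t, e t \in A.
Proof.
move=> TA; exists (fun t => enum_val (widen_ord TA (enum_rank t))); split.
  by move=> x y /enum_val_inj /(congr1 val) /= /val_inj; apply: enum_rank_inj.
by move=> t; apply: enum_valP.
Qed.

Lemma exists_notin_image (K U : finType) (h : K -> U) (V : {set U}) :
  injective h -> #|V| < #|K| -> exists k, h k \notin V.
Proof.
move=> h_inj VK; apply/existsP; apply: contraTT VK => /existsPn hV.
rewrite -leqNgt -cardsT -(card_imset setT h_inj).
by apply/subset_leq_card/subsetP => _ /imsetP[k _ ->]; move: (hV k); rewrite negbK.
Qed.

Lemma antitone_fin_choice (T : finType) (P : T -> nat -> Prop) :
  (forall t m m', m <= m' -> P t m' -> P t m) -> (forall m, exists t, P t m) ->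
  exists t, forall m, P t m.
Proof.
move=> P_anti P_ex; apply: NNPP => no_t.
have fails t : exists m, ~ P t m.
  by apply: not_all_ex_not => Pt; apply: no_t; exists t.
have [M notPM] := fin_all_exists fails.
have [t Pt] := P_ex (\max_t M t).
by apply: (notPM t); apply: P_anti Pt; apply: leq_bigmax.
Qed.

Section Ramsey.
Variable G : sgraph.
Implicit Types (A B : {set vert G}) (c : bool).

Lemma homogeneous_setU1 c x B :
  homogeneous c B -> {in B, forall y, adj x y = c} -> homogeneous c (x |: B).
Proof.
move=> hB xB y z; rewrite !inE => /predU1P[->|yB] /predU1P[->|zB]; rewrite ?eqxx //.
- by move=> _; apply: xB.
- by move=> _; rewrite adj_sym; apply: xB.
- exact: hB.
Qed.

Lemma homogeneous_extend c x A B : x \in A -> B \subset A :\ x ->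
  homogeneous c B -> {in B, forall y, adj x y = c} ->
  [/\ x |: B \subset A, #|x |: B| = #|B|.+1 & homogeneous c (x |: B)].
Proof.
move=> xA /subsetP BA hB xB; split; last exact: homogeneous_setU1.
- by apply/subsetP => y /setU1P[->//|/BA]; rewrite inE => /andP[].
- by rewrite cardsU1; case: (boolP (x \in B)) => // /BA; rewrite !inE eqxx.
Qed.

Lemma ramsey_offdiag s t A : 2 ^ (s + t) <= #|A| -> exists B, B \subset A /\
  (s <= #|B| /\ homogeneous true B \/ t <= #|B| /\ homogeneous false B).
Proof.
have set0_hom c : homogeneous c set0 by move=> x y; rewrite inE.
elim: s t A => [|s IHs] t A.
  by move=> _; exists set0; split; [apply: sub0set | left].
elim: t A => [|t IHt] A.
  by move=> _; exists set0; split; [apply: sub0set | right].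
move=> Abig; have /card_gt0P[x xA] : 0 < #|A| by apply: leq_trans Abig; rewrite expn_gt0.
set N := (A :\ x) :&: [set y | adj x y]; set M := (A :\ x) :\: [set y | adj x y].
have NM : #|A| = (#|N| + #|M|).+1 by rewrite cardsID (cardsD1 x A) xA.
have NA : N \subset A :\ x by apply: subsetIl.
have MA : M \subset A :\ x by apply: subsetDl.
have Ax : A :\ x \subset A by apply: subsetDl.
have [Nbig|Mbig] : 2 ^ (s + t.+1) <= #|N| \/ 2 ^ (s.+1 + t) <= #|M|.
  by move: Abig; rewrite [s.+1 + t]addSn -addnS addSn expnS NM; lia.
- have [B [BN [[sB hB]|[tB hB]]]] := IHs t.+1 N Nbig.
  + have xB : {in B, forall y, adj x y = true}.
      by move=> y /(subsetP BN); rewrite !inE => /andP[].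
    have [xBA cxB hxB] := homogeneous_extend xA (subset_trans BN NA) hB xB.
    by exists (x |: B); split=> //; left; rewrite cxB.
  + by exists B; split; [apply: subset_trans BN (subset_trans NA Ax) | right].
- have [B [BM [[sB hB]|[tB hB]]]] := IHt M Mbig.
  + by exists B; split; [apply: subset_trans BM (subset_trans MA Ax) | left].
  + have xB : {in B, forall y, adj x y = false}.
      by move=> y /(subsetP BM); rewrite !inE => /andP[/negbTE].
    have [xBA cxB hxB] := homogeneous_extend xA (subset_trans BM MA) hB xB.
    by exists (x |: B); split=> //; right; rewrite cxB.
Qed.

Lemma ramsey_homogeneous m A : 2 ^ (m + m) <= #|A| ->
  exists c B, [/\ B \subset A, m <= #|B| & homogeneous c B].
Proof.
move=> /ramsey_offdiag[B [BA [[mB hB]|[mB hB]]]]; first by exists true, B.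
by exists false, B.
Qed.

End Ramsey.

Lemma shattered_homogeneous_copy (G : sgraph) (T : finType) (X : {set vert G}) :
  shattered X -> 2 ^ (#|T| + #|T|) <= #|X| ->
  exists c (e : T -> vert G) (w : {set T} -> vert G),
    [/\ injective e, forall p q, p != q -> adj (e p) (e q) = c
      & forall S p, (e p \in cnbhd (w S)) = (p \in S)].
Proof.
move=> shX /ramsey_homogeneous[c [Y [YX TY hY]]].
have [e [e_inj eY]] := exists_injective_into TY.
have eX p : e p \in X by apply: subsetP YX _ (eY p).
have traces (S : {set T}) : exists v, cnbhd v :&: X = e @: S.
  by apply: shX; apply/subsetP => _ /imsetP[p _ ->].
have [w w_nbhd] := fin_all_exists traces.
exists c, e, w; split=> // [p q pq | S p].
  by apply: hY; rewrite ?eY // (inj_eq e_inj).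
by rewrite -(mem_imset _ _ e_inj) -w_nbhd in_setI eX andbT.
Qed.

(* A code [(f, (g, s))] names a future image vertex: [f] is its pattern of
   adjacencies to the columns, [g] separates distinct vertices with the same
   pattern, and [s] lets it avoid being a column itself. *)
Definition code_type (m : nat) : finType :=
  ({ffun 'I_(2 ^ (m + m)) -> bool} * ('I_m.+1 * 'I_(2 ^ (m + m)).+1))%type.

Section Universal.
Variables (G : sgraph) (m : nat) (c1 : bool).
Variables (e : code_type m -> vert G) (w : {set code_type m} -> vert G).
Hypothesis e_inj : injective e.
Hypothesis e_hom : forall p q, p != q -> adj (e p) (e q) = c1.
Hypothesis w_nbhd : forall S p, (e p \in cnbhd (w S)) = (p \in S).

Local Notation n := (2 ^ (m + m)).

Definition column (i : 'I_n) : vert G := w [set p : code_type m | p.1 i].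

Lemma column_nbhd p i : (e p \in cnbhd (column i)) = p.1 i.
Proof. by rewrite w_nbhd inE. Qed.

Lemma column_inj : injective column.
Proof.
move=> i j eq_ij; have := column_nbhd ([ffun k => k == i], (ord0, ord0)) j.
by rewrite -eq_ij column_nbhd /= !ffunE eqxx => /esym/eqP.
Qed.

Lemma code_avoids_columns f g : exists s, e (f, (g, s)) \notin [set column i | i : 'I_n].
Proof.
apply: exists_notin_image; first by move=> s1 s2 /e_inj[].
by rewrite card_imset ?cardsT /= ?card_ord //; apply: column_inj.
Qed.

Lemma homogeneous_columns : exists c2 (I : {set 'I_n}), m <= #|I| /\
  forall i j, i \in I -> j \in I -> i != j -> adj (column i) (column j) = c2.
Proof.
have [|c2 [W [Wcol mW hW]]] := @ramsey_homogeneous G m [set column i | i : 'I_n].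
  by rewrite card_imset ?cardsT ?card_ord //; apply: column_inj.
exists c2, (column @^-1: W); split=> [|i j]; last first.
  by rewrite !inE => iW jW ij; apply: hW; rewrite // (inj_eq column_inj).
apply: leq_trans mW _; rewrite -(card_imset _ column_inj); apply: subset_leq_card.
apply/subsetP => x xW; have /imsetP[i _ xi] := subsetP Wcol x xW.
by apply/imsetP; exists i; rewrite // inE -xi.
Qed.

Section Placement.
Variables (c2 : bool) (I : {set 'I_n}).
Hypothesis I_hom : forall i j, i \in I -> j \in I -> i != j -> adj (column i) (column j) = c2.
Variables (H : sgraph) (A : {set vert H}).
Hypotheses (A_hom : homogeneous c1 A) (AC_hom : homogeneous c2 (~: A)).
Variables (beta : vert H -> 'I_n) (gam : vert H -> 'I_m.+1).
Hypotheses (beta_inj : injective beta) (beta_I : forall u, beta u \in I).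
Hypothesis gam_inj : injective gam.

Definition pattern (u : vert H) : {ffun 'I_n -> bool} :=
  [ffun i => [exists z, [&& beta z == i, z \notin A & adj u z]]].

Definition slot (u : vert H) : 'I_n.+1 := xchoose (code_avoids_columns (pattern u) (gam u)).

Definition place (u : vert H) : vert G :=
  if u \in A then e (pattern u, (gam u, slot u)) else column (beta u).

Lemma pattern_beta u z : z \notin A -> pattern u (beta z) = adj u z.
Proof.
move=> zA; rewrite ffunE; apply/existsP/idP => [[z' /and3P[/eqP/beta_inj -> _ //]]|uz].
by exists z; rewrite eqxx zA uz.
Qed.

Lemma code_notin_columns u : e (pattern u, (gam u, slot u)) \notin [set column i | i : 'I_n].
Proof. exact: xchooseP (code_avoids_columns _ _). Qed.

Lemma place_code u : u \in A -> place u = e (pattern u, (gam u, slot u)).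
Proof. by rewrite /place => ->. Qed.

Lemma place_column u : u \notin A -> place u = column (beta u).
Proof. by rewrite /place => /negbTE ->. Qed.

Lemma place_cross_neq u z : u \in A -> z \notin A -> place u != place z.
Proof.
move=> uA zA; rewrite (place_code uA) (place_column zA).
by apply: contraNneq (code_notin_columns u) => ->; apply: imset_f.
Qed.

Lemma place_adj_cross u z : u \in A -> z \notin A -> adj (place u) (place z) = adj u z.
Proof.
move=> uA zA; have := place_cross_neq uA zA.
rewrite (place_code uA) (place_column zA) adj_sym => neq.
have := column_nbhd (pattern u, (gam u, slot u)) (beta z).
by rewrite /= pattern_beta // inE (negbTE neq) => <-.
Qed.

Lemma place_embedding : induced_embedding place.
Proof.
split=> [u z|u z].
  case: (boolP (u \in A)) => uA; case: (boolP (z \in A)) => zA.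
  - by rewrite !place_code // => /e_inj[_ /gam_inj].
  - by move/eqP; rewrite (negbTE (place_cross_neq uA zA)).
  - by move/esym/eqP; rewrite (negbTE (place_cross_neq zA uA)).
  - by rewrite !place_column // => /column_inj/beta_inj.
case: (eqVneq u z) => [->|uz]; first by rewrite !adj_irrefl.
case: (boolP (u \in A)) => uA; case: (boolP (z \in A)) => zA.
- rewrite !place_code // A_hom // e_hom //.
  by apply: contra_neq uz => -[_ /gam_inj].
- exact: place_adj_cross.
- by rewrite adj_sym [RHS]adj_sym place_adj_cross.
- rewrite !place_column // AC_hom ?inE // I_hom //.
  by apply: contra_neq uz => /beta_inj.
Qed.

End Placement.

Lemma two_homogeneous_embeds : exists c2, forall H : sgraph,
  #|vert H| <= m -> two_homogeneous c1 c2 H ->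
  exists phi : vert H -> vert G, induced_embedding phi.
Proof.
have [c2 [I [mI I_hom]]] := homogeneous_columns.
exists c2 => H Hm [A [A_hom AC_hom]].
have [beta [beta_inj beta_I]] := exists_injective_into (leq_trans Hm mI).
have Hm1 : #|vert H| <= #|[set: 'I_m.+1]| by rewrite cardsT card_ord; apply: leqW.
have [gam [gam_inj _]] := exists_injective_into Hm1.
exists (place A beta gam).
exact: (place_embedding I_hom A_hom AC_hom beta_inj beta_I gam_inj).
Qed.

End Universal.

Lemma hereditary_embedding (C : sgraph -> Prop) (G H : sgraph) (phi : vert H -> vert G) :
  hereditary C -> C G -> induced_embedding phi -> C H.
Proof.
move=> [C_iso C_ind] CG [phi_inj phi_adj].
pose S := [set phi u | u in [set: vert H]].
pose g u : vert (induced S) := exist (fun x => x \in S) (phi u) (imset_f phi (in_setT u)).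
have g_bij : bijective g.
  apply: inj_card_bij => [u z /(congr1 val) /phi_inj //|].
  by rewrite /= /ind_vert card_sig -cardsE card_imset // cardsT.
have [g' gK g'K] := g_bij.
apply: C_iso (C_ind G S CG); exists g'; split; first by exists g.
by move=> x y; rewrite -{2}(g'K x) -{2}(g'K y) /= /ind_adj /= phi_adj.
Qed.

Definition small_two_homogeneous_in (C : sgraph -> Prop) (c1 c2 : bool) (m : nat) :=
  forall H : sgraph, #|vert H| <= m -> two_homogeneous c1 c2 H -> C H.

Lemma infinite_VC_small_two_homogeneous (C : sgraph -> Prop) :
  hereditary C -> infinite_VC C ->
  forall m, exists c1 c2, small_two_homogeneous_in C c1 c2 m.
Proof.
move=> C_her C_VC m.
have [G [CG [X [shX Xbig]]]] := C_VC (2 ^ (#|code_type m| + #|code_type m|)).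
have [c1 [e [w [e_inj e_hom w_nbhd]]]] := shattered_homogeneous_copy shX Xbig.
have [c2 embeds] := two_homogeneous_embeds e_inj e_hom w_nbhd.
exists c1, c2 => H Hm /(embeds H Hm)[phi phi_emb].
exact: hereditary_embedding C_her CG phi_emb.
Qed.

Lemma vpart2_setC (G : sgraph) (A B : {set vert G}) : vpart2 A B -> ~: A = B.
Proof.
move=> [dAB AB]; apply/setP => x; rewrite inE.
case xA: (x \in A); first by rewrite (disjointFr dAB xA).
by have := in_setT x; rewrite -AB inE xA.
Qed.

Lemma clique_homogeneous (G : sgraph) (A : {set vert G}) : clique A -> homogeneous true A.
Proof. by move=> A_clique x y xA yA xy; apply: A_clique. Qed.

Lemma stable_homogeneous (G : sgraph) (A : {set vert G}) : stable A -> homogeneous false A.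
Proof. by move=> A_stable x y xA yA _; apply/negbTE/A_stable. Qed.

Lemma bipartite_two_homogeneous G : bipartite G -> two_homogeneous false false G.
Proof.
move=> [A [B [AB [hA hB]]]]; exists A.
by rewrite (vpart2_setC AB); split; apply: stable_homogeneous.
Qed.

Lemma cobipartite_two_homogeneous G : cobipartite G -> two_homogeneous true true G.
Proof.
move=> [A [B [AB [hA hB]]]]; exists A.
by rewrite (vpart2_setC AB); split; apply: clique_homogeneous.
Qed.

Lemma split_graph_two_homogeneous G c : split_graph G -> two_homogeneous c (~~ c) G.
Proof.
move=> [A [B [AB [hA hB]]]]; case: c; [exists A | exists B].
- rewrite (vpart2_setC AB).
  by split; [apply: clique_homogeneous | apply: stable_homogeneous].
- rewrite -{2}(vpart2_setC AB) setCK.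
  by split; [apply: stable_homogeneous | apply: clique_homogeneous].
Qed.

Theorem mainTheorem4 (C : sgraph -> Prop) :
  hereditary C -> infinite_VC C ->
  (forall G, bipartite G -> C G) \/
  (forall G, cobipartite G -> C G) \/
  (forall G, split_graph G -> C G).
Proof.
move=> C_her C_VC.
have [[c1 c2] all_small] :
    exists c : bool * bool, forall m, small_two_homogeneous_in C c.1 c.2 m.
  apply: antitone_fin_choice => [c m m' mm' Cm' H Hm|m].
    by apply: Cm'; apply: leq_trans Hm mm'.
  by have [c1 [c2 Cm]] := infinite_VC_small_two_homogeneous C_her C_VC m; exists (c1, c2).
have in_C G : two_homogeneous c1 c2 G -> C G := all_small _ G (leqnn _).
move: c1 c2 in_C {all_small} => [] [] in_C.
- by right; left; move=> G /cobipartite_two_homogeneous/in_C.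
- by right; right; move=> G /(split_graph_two_homogeneous true)/in_C.
- by right; right; move=> G /(split_graph_two_homogeneous false)/in_C.
- by left; move=> G /bipartite_two_homogeneous/in_C.
Qed.
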